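(* Let $X$ be a set and let $X_d$ denote $X$ with the discrete topology. Then every flow $\varphi:\mathbb{R}\times 2^{X_d}_L\rightarrow 2^{X_d}_L$ is trivial, i.e. $\varphi(t,C)=C$ for all $t\in\mathbb{R}$ and all $C\in 2^{X_d}_L$.
   Context: For a set $X$ with the discrete topology, $2^X$ denotes the set of all non-empty (closed, hence all non-empty) subsets of $X$. For $U\subseteq X$ put $L_U=\{F\subseteq X \mid F\neq\emptyset,\ F\cap U\neq\emptyset\}$. The lower semifinite topology on $2^X$ is the topology having the sets $L_U$, $U$ open in $X_d$ (i.e. any subset of $X$), as a subbase; the resulting space is denoted $2^{X_d}_L$. A flow on a topological space $Y$ is a continuous map $\varphi:\mathbb{R}\times Y\to Y$ (with $\mathbb{R}$ carrying its usual topology and $\mathbb{R}\times Y$ the product topology) such that $\varphi(0,y)=y$ and $\varphi(s+t,y)=\varphi(s,\varphi(t,y))$ for all $s,t\in\mathbb{R}$, $y\in Y$. *)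

From HB Require Import structures.
From mathcomp Require Import all_boot all_order all_algebra.
From mathcomp Require Import all_classical all_reals all_analysis.
Set Implicit Arguments. Unset Strict Implicit. Unset Printing Implicit Defensive.
Import Order.TTheory GRing.Theory Num.Theory.
Import numFieldNormedType.Exports.
Local Open Scope classical_set_scope.

(* The hyperspace 2^X of all non-empty subsets of X (all subsets of X_d are closed). *)
Definition hyperspace (X : Type) : Type := {C : set X | C !=set0}.

HB.instance Definition _ (X : Type) := gen_eqMixin (hyperspace X).
HB.instance Definition _ (X : Type) := gen_choiceMixin (hyperspace X).

(* L_U = { F in 2^X | F meets U }, for U open in X_d, i.e. any U : set X. *)
Definition lower_subbase (X : Type) (U : set X) : set (hyperspace X) :=
  [set F | (projT1 F `&` U) !=set0].

Definition lower_hyperspace (X : Type) : Type := hyperspace X.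
HB.instance Definition _ (X : Type) := Choice.on (lower_hyperspace X).
HB.instance Definition _ (X : Type) :=
  isSubBaseTopological.Build (lower_hyperspace X)
    (@setT (set X)) (fun U : set X => @lower_subbase X U).

Definition is_flow (R : realType) (Y : topologicalType) (phi : R -> Y -> Y) : Prop :=
  [/\ continuous (fun p : R^o * Y => phi p.1 p.2),
      (forall y, phi 0%R y = y) &
      (forall s t y, phi (s + t)%R y = phi s (phi t y))].

From HB Require Import structures.
From mathcomp Require Import all_boot all_order all_algebra.
From mathcomp Require Import all_classical all_reals all_analysis.
From mathcomp Require Import finmap.
Import GRing.Theory.
Import numFieldNormedType.Exports.
Local Open Scope classical_set_scope.

(* The proof rests on three facts about the lower semifinite topology.
   (1) Open sets are upward closed for inclusion, and the subbasic sets L_U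
       are open; hence a continuous map f of 2^{X_d}_L is monotone:
       if x lies in f C and C is contained in D, then f D meets the
       neighbourhood L_{x} of f C, i.e. x lies in f D.
   (2) A map that is monotone and has a monotone inverse sends singletons
       to singletons.
   (3) A continuous path of singletons s |-> {y_s} on a connected space is
       constant: for a fixed x, the set {s | y_s = x} is the preimage of
       L_{x}, and its complement is the preimage of L_{X \ {x}}.
   For a flow phi, each phi t is a homeomorphism with inverse phi (-t), so by
   (1)-(2) the orbit s |-> phi s {x} is a path of singletons through {x},
   which by (3) is fixed.  Monotonicity then gives C <= phi t C for every C,
   and applying this to phi (-t) yields phi t C = C. *)

Section LowerHyperspace.
Context {X : Type}.

Lemma hyperspace_eq (C D : lower_hyperspace X) : sval C = sval D -> C = D.
Proof. by apply: eq_sig_hprop => A p q; exact: Prop_irrelevance. Qed.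

Definition singleton_hyp (x : X) : lower_hyperspace X :=
  exist _ [set x] (ex_intro (fun z => [set x] z) x erefl).

Lemma lower_subbase_open (U : set X) :
  open (lower_subbase U : set (lower_hyperspace X)).
Proof.
exists [set lower_subbase U]; last by rewrite bigcup_set1.
move=> _ ->; exists [fset U]%fset; first by move=> ?; rewrite in_setT.
by rewrite set_fset1 bigcap_set1.
Qed.

(* Open sets are upward closed: enlarging a member of an open set keeps it
   inside, since every subbasic set L_U is. *)
Lemma lower_open_upclosed {O : set (lower_hyperspace X)}
    {C D : lower_hyperspace X} :
  open O -> O C -> sval C `<=` sval D -> O D.
Proof.
case=> B Bbase <- [A BA AC] CD /=; exists A => //.
have [F _ defA] := Bbase A BA; move: AC; rewrite -defA => AC U FU.
by have [x [Cx Ux]] := AC U FU; exists x; split => //; exact: CD.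
Qed.

End LowerHyperspace.

Lemma lower_continuous_monotone {X Y : Type}
    {f : lower_hyperspace X -> lower_hyperspace Y} :
  continuous f ->
  forall C D : lower_hyperspace X,
    sval C `<=` sval D -> sval (f C) `<=` sval (f D).
Proof.
move=> fcont C D CD y fCy.
have nbhs_fC : nbhs (f C) (lower_subbase [set y]).
  by apply: open_nbhs_nbhs; split; [exact: lower_subbase_open | exists y].
have := fcont C _ nbhs_fC; rewrite nbhsE => -[B [Bopen BC] Bsub].
by have [z [fDz /= <-]] := Bsub D (lower_open_upclosed Bopen BC CD).
Qed.

(* An inclusion-preserving bijection with inclusion-preserving inverse maps
   singletons to singletons, as they are the minimal points. *)
Lemma monotone_iso_singleton {X Y : Type}
    {f : lower_hyperspace X -> lower_hyperspace Y}
    {g : lower_hyperspace Y -> lower_hyperspace X} :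
  (forall C D : lower_hyperspace X,
     sval C `<=` sval D -> sval (f C) `<=` sval (f D)) ->
  (forall C D : lower_hyperspace Y,
     sval C `<=` sval D -> sval (g C) `<=` sval (g D)) ->
  cancel f g -> cancel g f ->
  forall x, exists y, sval (f (singleton_hyp x)) = [set y].
Proof.
move=> fmono gmono fK gK x; have [y fxy] := svalP (f (singleton_hyp x)).
exists y; apply/seteqP; split; last by move=> _ ->.
have gy_sub_x : sval (g (singleton_hyp y)) `<=` [set x].
  have y_sub_fx : sval (singleton_hyp y) `<=` sval (f (singleton_hyp x)).
    by move=> _ ->.
  by move/gmono: y_sub_fx; rewrite fK.
have x_sub_gy : sval (singleton_hyp x) `<=` sval (g (singleton_hyp y)).
  have [w gyw] := svalP (g (singleton_hyp y)).
  by move=> _ ->; rewrite -(gy_sub_x w gyw).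
by have := fmono _ _ x_sub_gy; rewrite gK.
Qed.

(* A continuous path of singletons on a connected space is constant: the
   times at which it passes through a given point form a clopen set. *)
Lemma singleton_path_constant {T : topologicalType} {X : Type}
    (gamma : T -> lower_hyperspace X) :
  connected [set: T] -> continuous gamma ->
  (forall s, exists y, sval (gamma s) = [set y]) ->
  forall s t, gamma s = gamma t.
Proof.
move=> Tconn gcont gsingle s t.
have [x gs_x] := gsingle s; have [y gt_y] := gsingle t.
pose A := [set r | sval (gamma r) x].
have A_open : A = gamma @^-1` lower_subbase [set x].
  apply/seteqP; split => r /=; first by exists x.
  by case=> z [gz /= zx]; rewrite /A /= -zx.
have A_closed : A = ~` (gamma @^-1` lower_subbase (~` [set x])).
  apply/seteqP; split => r /=.
    move=> r_in_A [w [gw w_ne_x]]; have [z gz] := gsingle r.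
    by move: r_in_A gw w_ne_x; rewrite /A /= gz => -> -> /(_ erefl).
  move=> notout; apply: contrapT => r_notA; apply: notout.
  have [w gw] := svalP (gamma r); exists w; split => // wx.
  by apply: r_notA; rewrite /A /= -wx.
have AT : A = setT.
  apply: Tconn; first by exists s; rewrite /A /= gs_x.
    exists A; last by rewrite setTI.
    rewrite A_open; apply: open_comp => [r _|]; first exact: gcont.
    exact: lower_subbase_open.
  exists A; last by rewrite setTI.
  rewrite A_closed; apply: open_closedC; apply: open_comp => [r _|].
    exact: gcont.
  exact: lower_subbase_open.
have : A t by rewrite AT.
by rewrite /A /= gt_y => xy; apply: hyperspace_eq; rewrite gs_x gt_y xy.
Qed.

Section FlowBasics.
Context {R : realType} {Y : topologicalType} {phi : R -> Y -> Y}.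
Hypothesis phi_flow : is_flow phi.

Lemma flow_continuous_map (t : R) : continuous (phi t).
Proof.
case: phi_flow => pcont _ _ y.
apply: (continuous_comp (f := fun z : Y => (t : R^o, z)) _ (pcont (t, y))).
exact: (cvg_pair (cvg_cst t) cvg_id).
Qed.

Lemma flow_continuous_orbit (y : Y) : continuous (fun s : R => phi s y).
Proof.
case: phi_flow => pcont _ _ s.
apply: (continuous_comp (f := fun r : R => (r : R^o, y)) _ (pcont (s, y))).
exact: (cvg_pair cvg_id (cvg_cst y)).
Qed.

Lemma flow0 (y : Y) : phi 0%R y = y.
Proof. by case: phi_flow. Qed.

Lemma flowK (t : R) : cancel (phi t) (phi (- t)%R).
Proof. by case: phi_flow => _ h0 hadd y; rewrite -hadd addNr h0. Qed.

Lemma flowNK (t : R) : cancel (phi (- t)%R) (phi t).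
Proof. by case: phi_flow => _ h0 hadd y; rewrite -hadd addrN h0. Qed.

End FlowBasics.

Theorem mainTheorem1 (R : realType) (X : Type)
  (phi : R -> lower_hyperspace X -> lower_hyperspace X) :
  is_flow phi -> forall (t : R) (C : lower_hyperspace X), phi t C = C.
Proof.
move=> phi_flow.
have mono t := lower_continuous_monotone (flow_continuous_map phi_flow t).
have fixed_singleton t x : phi t (singleton_hyp x) = singleton_hyp x.
  rewrite -[in RHS](flow0 phi_flow (singleton_hyp x)).
  apply: (singleton_path_constant (fun s => phi s _)).
  - by apply/connected_intervalP => ? ? ? ? ? _.
  - exact: flow_continuous_orbit.
  - move=> s; exact: (monotone_iso_singleton (mono s) (mono (- s)%R)
                         (flowK phi_flow s) (flowNK phi_flow s)).
have extensive t (C : lower_hyperspace X) : sval C `<=` sval (phi t C).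
  move=> x Cx; have x_sub_C : sval (singleton_hyp x) `<=` sval C by move=> _ ->.
  by have := mono t _ _ x_sub_C x; rewrite fixed_singleton; apply.
move=> t C; apply: hyperspace_eq; apply/seteqP; split; last exact: extensive.
by rewrite -[X in _ `<=` sval X](flowK phi_flow t C); exact: extensive.
Qed.
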